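(* None of the posets encoded by $111011$, $111001$, $101011$, $110001$, and $110011$ has a 4-crown stack as a retract.
   Context: All posets are finite; level sets $P(0)=\min P$, $P(k+1)=\min(P\setminus\bigcup_{i\le k}P(i))$; $A<B$ means $a<b$ for all $a\in A,b\in B$. A retract is the image of an idempotent order-preserving self-map. A 4-crown stack is an ordinal sum of at least two 2-element antichains. A 6-crown is $x_0<y_0>x_1<y_1>x_2<y_2>x_0$ with no other comparabilities; type $3C$ means three disjoint 2-element chains with no further comparabilities. Encoding: for a binary string $b_0b_1\cdots b_{n-1}$, the encoded poset is the (unique up to isomorphism) poset $Q$ of height $n$ whose level sets $Q(0),\dots,Q(n)$ are 3-element antichains, with $Q(k)<Q(\ell)$ whenever $\ell\ge k+2$, and with $Q(k)\cup Q(k+1)$ a 6-crown if $b_k=1$ and of type $3C$ if $b_k=0$; all comparabilities follow from these. When $b_0=b_{n-1}=1$ (as for all posets here) this is exactly a nice section of width three of height $n$ with horizon 2. *)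

From mathcomp Require Import all_boot.
Set Implicit Arguments.
Unset Strict Implicit.
Unset Printing Implicit Defensive.

(* Elements of the poset encoded by a binary string b of length n:
   pairs (k, i) with k : 'I_(n+1) the level and i : 'I_3 the position in the
   level.  Level k is the 3-element antichain Q(k). *)
Definition enc_elt (b : seq bool) := ('I_(size b).+1 * 'I_3)%type.

(* Comparabilities between consecutive levels Q(k) (lower, index i) and
   Q(k+1) (upper, index j):
   - b_k = 1: 6-crown x_0<y_0>x_1<y_1>x_2<y_2>x_0, i.e. y_j is above x_j and
     x_(j+1 mod 3);
   - b_k = 0: type 3C, i.e. x_j < y_j only. *)
Definition adj_le (bk : bool) (i j : 'I_3) : bool :=
  if bk then (i == j :> nat) || (i == (j.+1 %% 3) :> nat)
  else (i == j :> nat).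

Definition enc_le (b : seq bool) : rel (enc_elt b) :=
  fun p q =>
    (p == q)
    || (p.1.+2 <= q.1)
    || ((q.1 == p.1.+1 :> nat) && adj_le (nth false b p.1) p.2 q.2).

(* Order of the 4-crown stack with m levels: ordinal sum of m 2-element
   antichains, elements (a, x) with a : 'I_m the level, x : bool. *)
Definition stack_le (m : nat) : rel ('I_m * bool) :=
  fun p q => (p == q) || (p.1 < q.1).

Definition is_retraction (T : Type) (le : rel T) (r : T -> T) : Prop :=
  (forall x y, le x y -> le (r x) (r y)) /\ (forall x, r (r x) = r x).

Definition has_4crown_stack_retract (T : Type) (le : rel T) : Prop :=
  exists r : T -> T, is_retraction le r /\
    exists m : nat, 2 <= m /\
      exists f : 'I_m * bool -> T,
        [/\ injective f,
            (forall p, exists x, f p = r x),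
            (forall x, exists p, r x = f p) &
            (forall p q, le (f p) (f q) = stack_le p q)].

From mathcomp Require Import all_boot zify.
Set Implicit Arguments.
Unset Strict Implicit.
Unset Printing Implicit Defensive.

(* A retraction r onto a 4-crown stack with levels L_0 < L_1 < ... < L_(m-1)
   yields a chain of 2-element antichains of P, each strictly above the
   previous one, such that r fixes their union S and maps P into S.  For a
   fixed S, such an r is ruled out by constraint propagation: start with the
   candidate values r x in S compatible with the order between x and S, and
   repeatedly discard every candidate for x (resp. y) with x <= y that has no
   comparable candidate for y (resp. x).  When some candidate list becomes
   empty, no such r exists.  For each of the five posets, every chain of
   2-element antichains is refuted in this way by a finite search. *)

Lemma has_4crown_stack_retract_eq (T : Type) (le le' : rel T) :
  le =2 le' -> has_4crown_stack_retract le -> has_4crown_stack_retract le'.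
Proof.
move=> Ele [r [[r_mono r_idem] [m [m_ge2 [f [f_inj f_im im_f f_le]]]]]].
exists r; split; first by split=> // x y; rewrite -!Ele; apply: r_mono.
by exists m; split=> //; exists f; split=> // p q; rewrite -Ele.
Qed.

Section Enumerated.

Variables (T : finType) (x0 : T) (idx : T -> nat) (e : seq T).
Hypothesis idx_lt : forall x, idx x < size e.
Hypothesis nth_idx : forall x, nth x0 e (idx x) = x.

Lemma idx_inj : injective idx.
Proof. by move=> x y Exy; rewrite -(nth_idx x) -(nth_idx y) Exy. Qed.

Lemma mem_enum_seq x : x \in e.
Proof. by rewrite -(nth_idx x) mem_nth. Qed.

Lemma card_le_size : #|T| <= size e.
Proof. by rewrite cardE uniq_leq_size ?enum_uniq // => x _; apply: mem_enum_seq. Qed.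

Section Propagation.

Variable le : rel T.

Definition cands (D : seq (seq T)) (x : T) : seq T := nth [::] D (idx x).

Definition init_cands (S : seq T) : seq (seq T) :=
  [seq [seq s <- S | all (fun t => (le t x ==> le t s) && (le x t ==> le s t)) S]
  | x <- e].

Definition revise (D : seq (seq T)) (xy : T * T) : seq (seq T) :=
  let: (x, y) := xy in
  if le x y then
    let Dx := [seq a <- cands D x | has (le a) (cands D y)] in
    let Dy := [seq c <- cands D y | has (le^~ c) Dx] in
    set_nth [::] (set_nth [::] D (idx x) Dx) (idx y) Dy
  else D.

Definition wiped (D : seq (seq T)) : bool := has (fun x => nilp (cands D x)) e.

Fixpoint propagation_wipes (arcs : seq (T * T)) (k : nat) D : bool :=
  if wiped D then true
  else if k is k'.+1 then propagation_wipes arcs k' (foldl revise D arcs)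
  else false.

Section Soundness.

Variables (r : T -> T) (S : seq T).
Hypothesis r_mono : forall x y, le x y -> le (r x) (r y).
Hypothesis r_in_S : forall x, r x \in S.
Hypothesis r_fixes_S : forall t, t \in S -> r t = t.

Definition admits_r D := forall x, r x \in cands D x.

Lemma cands_set_nth D y s z :
  cands (set_nth [::] D (idx y) s) z = if z == y then s else cands D z.
Proof.
rewrite /cands nth_set_nth /=.
by case: (z =P y) => [-> | neq]; [rewrite eqxx | case: eqP => // /idx_inj].
Qed.

Lemma admits_r_revise D xy : admits_r D -> admits_r (revise D xy).
Proof.
case: xy => x y rD; rewrite /revise; case: ifP => // le_xy z.
have rx : r x \in [seq a <- cands D x | has (le a) (cands D y)].
  by rewrite mem_filter rD andbT; apply/hasP; exists (r y); [apply: rD | apply: r_mono].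
rewrite !cands_set_nth; case: eqP => [-> | _].
  by rewrite mem_filter rD andbT; apply/hasP; exists (r x) => //; apply: r_mono.
by case: eqP => [-> | _].
Qed.

Lemma admits_r_init : admits_r (init_cands S).
Proof.
move=> x; rewrite /cands (nth_map x0) // nth_idx mem_filter r_in_S andbT.
apply/allP => t tS; rewrite -{2 4}(r_fixes_S tS).
by apply/andP; split; apply/implyP; apply: r_mono.
Qed.

Lemma admits_r_not_wiped D : admits_r D -> wiped D = false.
Proof. by move=> rD; apply/hasP=> -[x _ /nilP Dx]; move: (rD x); rewrite Dx. Qed.

Lemma propagation_not_wiped arcs k D : admits_r D -> propagation_wipes arcs k D = false.
Proof.
elim: k D => [|k IHk] D rD /=; rewrite admits_r_not_wiped //.
by apply: IHk; elim: arcs D rD => //= xy arcs IHa D rD; apply/IHa/admits_r_revise.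
Qed.

End Soundness.

Definition chain_elts (L : seq (T * T)) : seq T := flatten [seq [:: p.1; p.2] | p <- L].

Definition strict_le (x y : T) : bool := (x != y) && le x y.

Definition strictly_below (p q : T * T) : bool :=
  [&& strict_le p.1 q.1, strict_le p.1 q.2, strict_le p.2 q.1 & strict_le p.2 q.2].

Section ChainSearch.

Variables (arcs levels : seq (T * T)).

(* Soundness holds for any [arcs] and any number of rounds; six rounds over
   the covering pairs suffice for the posets at hand. *)
Definition chain_refuted (L : seq (T * T)) : bool :=
  propagation_wipes arcs 6 (init_cands (chain_elts L)).

Lemma chain_refuted_retraction r L :
  (forall x y, le x y -> le (r x) (r y)) ->
  (forall x, r x \in chain_elts L) ->
  (forall t, t \in chain_elts L -> r t = t) ->
  chain_refuted L = false.
Proof.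
by move=> r_mono r_in r_fix; apply: (propagation_not_wiped r_mono); apply: admits_r_init.
Qed.

(* [top :: below] is a chain of [levels], listed from the top.  The [if]s,
   rather than boolean connectives, keep the search lazy under [vm_compute]. *)
Fixpoint chains_refuted (n : nat) (top : T * T) (below : seq (T * T)) : bool :=
  if (if below is [::] then true else chain_refuted (top :: below)) then
    if n is n'.+1 then
      all (fun p => if strictly_below top p then chains_refuted n' p (top :: below)
                    else true) levels
    else true
  else false.

Lemma chains_refuted_step n top below p :
  chains_refuted n.+1 top below -> p \in levels -> strictly_below top p ->
  chains_refuted n p (top :: below).
Proof. by rewrite /=; case: ifP => // _ /allP refuted /refuted; case: ifP. Qed.

Lemma chains_refuted_chain n top below :
  chains_refuted n top below -> below != [::] -> chain_refuted (top :: below).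
Proof. by case: below => // b below; case: n => [|n] /=; case: ifP. Qed.

Lemma chains_refuted_ladder (lvl : nat -> T * T) k n :
  (forall a, a <= k -> lvl a \in levels) ->
  (forall a, a < k -> strictly_below (lvl a) (lvl a.+1)) ->
  chains_refuted (k + n) (lvl 0) [::] ->
  chains_refuted n (lvl k) [seq lvl a | a <- rev (iota 0 k)].
Proof.
elim: k n => [//|k IHk] n lvl_in lvl_below.
rewrite addSnnS => /IHk refuted_k.
rewrite -addn1 iotaD rev_cat /= add0n addn1.
apply: chains_refuted_step; [|exact: lvl_in|exact: lvl_below].
by apply: refuted_k => [a /leqW/lvl_in | a /ltnW/lvl_below].
Qed.

End ChainSearch.

Definition covers : seq (T * T) :=
  [seq xy <- [seq (x, y) | x <- e, y <- e] |
    [&& xy.1 != xy.2, le xy.1 xy.2 &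
        ~~ has (fun z => [&& z != xy.1, z != xy.2, le xy.1 z & le z xy.2]) e]].

Definition antichain_pairs : seq (T * T) :=
  [seq p <- [seq (x, y) | x <- e, y <- e] |
    [&& idx p.1 < idx p.2, ~~ le p.1 p.2 & ~~ le p.2 p.1]].

(* The [let]s make [vm_compute] build both lists only once. *)
Definition all_chains_refuted : bool :=
  let arcs := covers in let levels := antichain_pairs in
  all (fun p => chains_refuted arcs levels (size e) p [::]) levels.

Definition ordered_pair (x y : T) : T * T := if idx x < idx y then (x, y) else (y, x).

Lemma mem_ordered_pair x y t :
  (t \in [:: (ordered_pair x y).1; (ordered_pair x y).2]) = (t == x) || (t == y).
Proof. by rewrite /ordered_pair; case: ifP; rewrite !inE // orbC. Qed.

Lemma ordered_pair_antichain x y :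
  ~~ le x y -> ~~ le y x -> x != y -> ordered_pair x y \in antichain_pairs.
Proof.
move=> nxy nyx /(contra_neq (@idx_inj x y)); rewrite neq_ltn /ordered_pair.
case: ltngtP => // lt_xy _; rewrite mem_filter /= lt_xy ?nxy ?nyx;
  by apply: allpairs_f; apply: mem_enum_seq.
Qed.

Lemma strictly_below_ordered_pair x y u v :
  strict_le x u -> strict_le x v -> strict_le y u -> strict_le y v ->
  strictly_below (ordered_pair x y) (ordered_pair u v).
Proof. by rewrite /ordered_pair => xu xv yu yv; do 2 case: ifP => _; apply/and4P. Qed.

Theorem all_chains_refuted_no_retract :
  all_chains_refuted -> ~ has_4crown_stack_retract le.
Proof.
rewrite /all_chains_refuted /= => refuted.
move=> [r [[r_mono r_idem] [[|m] [m_ge2 [f [f_inj f_im im_f f_le]]]]]] //.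
pose lvl a := ordered_pair (f (inord a, false)) (f (inord a, true)).
have m_le : m <= size e.
  have := leq_trans (leq_card f f_inj) card_le_size.
  by rewrite card_prod card_ord card_bool; lia.
have f_strict (p q : 'I_m.+1 * bool) : p.1 < q.1 -> strict_le (f p) (f q).
  move=> lt_pq; rewrite /strict_le (inj_eq f_inj) f_le /stack_le lt_pq orbT andbT.
  by apply: contraTneq lt_pq => ->; rewrite ltnn.
have lvl_in a : a <= m -> lvl a \in antichain_pairs.
  move=> _; apply: ordered_pair_antichain;
    by rewrite ?(inj_eq f_inj) ?f_le /stack_le /= xpair_eqE eqxx ?ltnn.
have lvl_below a : a < m -> strictly_below (lvl a) (lvl a.+1).
  move=> lt_am; have lt_inord : (inord a : 'I_m.+1) < (inord a.+1 : 'I_m.+1).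
    by rewrite !inordK //; apply: ltnW.
  by apply: strictly_below_ordered_pair; apply: f_strict.
have r_fixes_f p : r (f p) = f p.
  by have [y ->] := f_im p; rewrite r_idem.
pose L := lvl m :: [seq lvl a | a <- rev (iota 0 m)].
have L_refuted : chain_refuted covers L.
  apply: (chains_refuted_chain (levels := antichain_pairs) (n := size e - m)).
    apply: chains_refuted_ladder => //; rewrite subnKC //.
    exact: (allP refuted _ (lvl_in 0 _)).
  by rewrite -size_eq0 size_map size_rev size_iota -lt0n.
have lvl_L a : a <= m -> lvl a \in L.
  rewrite leq_eqVlt => /orP [/eqP -> | lt_am]; first exact: mem_head.
  by rewrite inE map_f ?orbT // mem_rev mem_iota.
have L_lvl p : p \in L -> exists a, p = lvl a.
  by rewrite inE => /orP [/eqP -> | /mapP [a _ ->]]; [exists m | exists a].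
move: L_refuted; rewrite (chain_refuted_retraction _ (r := r)) //.
  move=> x; have [[a c] ->] := im_f x; apply/flatten_mapP; exists (lvl a).
    by apply: lvl_L; rewrite -ltnS.
  by rewrite mem_ordered_pair inord_val; case: c; rewrite eqxx ?orbT.
move=> t /flatten_mapP [_ /L_lvl [a ->]]; rewrite mem_ordered_pair.
by case/orP => /eqP ->; apply: r_fixes_f.
Qed.

End Propagation.

Definition tabulate (le : rel T) : seq (seq bool) := [seq [seq le x y | y <- e] | x <- e].

Definition tabulated (tbl : seq (seq bool)) : rel T :=
  fun x y => nth false (nth [::] tbl (idx x)) (idx y).

Lemma tabulatedK le : tabulated (tabulate le) =2 le.
Proof. by move=> x y; rewrite /tabulated !(nth_map x0) // !nth_idx. Qed.

(* Tabulating the order first makes [vm_compute] evaluate it once per pair. *)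
Corollary tabulated_refuted_no_retract le :
  all_chains_refuted (tabulated (tabulate le)) -> ~ has_4crown_stack_retract le.
Proof.
move=> /all_chains_refuted_no_retract no_retract /(has_4crown_stack_retract_eq _).
by move=> /(_ (tabulated (tabulate le))) retract; apply/no_retract/retract => x y; rewrite tabulatedK.
Qed.

End Enumerated.

Section ProdOrdEnum.

Variables m n : nat.

Definition prod_ord_idx (p : 'I_m.+1 * 'I_n.+1) : nat := p.1 * n.+1 + p.2.

(* Built with [Ordinal] rather than [inord], whose [insub] is stuck on the
   opaque [idP] under [vm_compute]. *)
Definition prod_ord_seq : seq ('I_m.+1 * 'I_n.+1) :=
  mkseq (fun k => (Ordinal (ltn_pmod (k %/ n.+1) (ltn0Sn m)),
                   Ordinal (ltn_pmod k (ltn0Sn n)))) (m.+1 * n.+1).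

Lemma prod_ord_idx_lt p : prod_ord_idx p < size prod_ord_seq.
Proof. by rewrite size_mkseq /prod_ord_idx; have := ltn_ord p.1; have := ltn_ord p.2; nia. Qed.

Lemma nth_prod_ord_seq p : nth (ord0, ord0) prod_ord_seq (prod_ord_idx p) = p.
Proof.
have := prod_ord_idx_lt p; rewrite /prod_ord_seq size_mkseq => lt_idx.
rewrite nth_mkseq //; case: p {lt_idx} => i j; congr pair; apply: val_inj;
  rewrite /prod_ord_idx /=.
  by rewrite divnMDl // (divn_small (ltn_ord j)) addn0 (modn_small (ltn_ord i)).
by rewrite modnMDl (modn_small (ltn_ord j)).
Qed.

End ProdOrdEnum.

Corollary prod_ord_no_retract m n (le : rel ('I_m.+1 * 'I_n.+1)) :
  all_chains_refuted (@prod_ord_idx m n) (prod_ord_seq m n)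
    (tabulated (@prod_ord_idx m n) (tabulate (prod_ord_seq m n) le)) ->
  ~ has_4crown_stack_retract le.
Proof. exact: tabulated_refuted_no_retract (@prod_ord_idx_lt m n) (@nth_prod_ord_seq m n) le. Qed.

Theorem lemma7p3 :
  forall b : seq bool,
    b \in [:: [:: true; true; true; false; true; true];
              [:: true; true; true; false; false; true];
              [:: true; false; true; false; true; true];
              [:: true; true; false; false; false; true];
              [:: true; true; false; false; true; true]] ->
    ~ has_4crown_stack_retract (@enc_le b).
Proof.
move=> b; rewrite !inE => /orP [|/orP [|/orP [|/orP []]]] /eqP ->;
  apply: prod_ord_no_retract; vm_cast_no_check (erefl true).
Qed.
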